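(* Let $\mathcal{A}:\mathbb{R}^{n_1\times n_2}\to\mathbb{R}^m$ be linear, $R\ge1$, $\alpha,\beta>0$, and let $\hat X=\sum_{r=1}^R\hat u^r(\hat v^r)^T$ with $\hat u^r\in\mathbb{R}^{n_1}$, $\hat v^r\in\mathbb{R}^{n_2}$. Let $\eta\in\mathbb{R}^m$ and $y=\mathcal{A}(\hat X)+\eta$. If $(u^1_{\alpha,\beta},\dots,u^R_{\alpha,\beta},v^1_{\alpha,\beta},\dots,v^R_{\alpha,\beta})$ is a global minimizer of $J^R_{\alpha,\beta}$ and $X_{\alpha,\beta}=\sum_{r=1}^R u^r_{\alpha,\beta}(v^r_{\alpha,\beta})^T$, then $$\|y-\mathcal{A}(X_{\alpha,\beta})\|_2^2\le\|\eta\|_2^2+C_{2,1}\sqrt[3]{\alpha\beta^2}\sum_{r=1}^R\left(\|\hat u^r\|_2\|\hat v^r\|_1\right)^{2/3}.$$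
   Context: For $y\in\mathbb{R}^m$ and $\alpha,\beta>0$, the functional $J^R_{\alpha,\beta}:(\mathbb{R}^{n_1})^R\times(\mathbb{R}^{n_2})^R\to\mathbb{R}$ is $$J^R_{\alpha,\beta}(u^1,\dots,u^R,v^1,\dots,v^R)=\Big\|y-\mathcal{A}\Big(\sum_{r=1}^Ru^r(v^r)^T\Big)\Big\|_2^2+\alpha\sum_{r=1}^R\|u^r\|_2^2+\beta\sum_{r=1}^R\|v^r\|_1.$$ The constant is $C_{2,1}=(1/2)^{2/3}+2^{1/3}$. *)

From Stdlib Require Import Reals Lra.
Open Scope R_scope.

Fixpoint rsum (n : nat) (f : nat -> R) : R :=
  match n with
  | O => 0
  | S k => rsum k f + f k
  end.

(* Vectors in R^n are functions nat -> R, only indices < n matter. *)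
Definition norm2 (n : nat) (x : nat -> R) : R := sqrt (rsum n (fun i => x i ^ 2)).
Definition norm1 (n : nat) (x : nat -> R) : R := rsum n (fun i => Rabs (x i)).

(* Real power x^p for x >= 0, with the convention 0^p = 0 (p > 0).
   (Stdlib's Rpower 0 p = 1, hence this wrapper.) *)
Definition rpow (x p : R) : R := if Req_EM_T x 0 then 0 else Rpower x p.

(* Linear map A : R^{n1 x n2} -> R^m given by its coefficient tensor a:
   A(X)_i = sum_{j<n1} sum_{k<n2} a i j k * X j k. *)
Definition applyA (n1 n2 : nat) (a : nat -> nat -> nat -> R)
  (X : nat -> nat -> R) : nat -> R :=
  fun i => rsum n1 (fun j => rsum n2 (fun k => a i j k * X j k)).

(* sum_{r<R} u^r (v^r)^T, with u r i = (u^r)_i, v r k = (v^r)_k *)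
Definition lowrank (Rk : nat) (u v : nat -> nat -> R) : nat -> nat -> R :=
  fun j k => rsum Rk (fun r => u r j * v r k).

Definition J (m n1 n2 : nat) (a : nat -> nat -> nat -> R) (y : nat -> R)
  (Rk : nat) (alpha beta : R) (u v : nat -> nat -> R) : R :=
  (norm2 m (fun i => y i - applyA n1 n2 a (lowrank Rk u v) i)) ^ 2
  + alpha * rsum Rk (fun r => (norm2 n1 (u r)) ^ 2)
  + beta * rsum Rk (fun r => norm1 n2 (v r)).

Definition C21 : R := Rpower (1/2) (2/3) + Rpower 2 (1/3).

(* Rescaling each rank-one term u^r (v^r)^T to (c u^r)(c^-1 v^r)^T does not change the
   data term, and the scale c minimising alpha c^2 a^2 + beta b / c (with a = |u^r|_2,
   b = |v^r|_1) brings the penalty of that term down to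
   C_{2,1} (alpha beta^2)^{1/3} (a b)^{2/3}.  Rescaling the ground truth this way gives a
   competitor whose residual is exactly eta, and the minimality of J does the rest. *)

From Stdlib Require Import Reals Lra Lia.
Open Scope R_scope.

Lemma rsum_ext n f g : (forall i, (i < n)%nat -> f i = g i) -> rsum n f = rsum n g.
Proof.
  induction n as [|n IH]; intros H; simpl; [reflexivity|].
  rewrite IH, H by (try intros; try apply H; lia); reflexivity.
Qed.

Lemma rsum_le n f g : (forall i, (i < n)%nat -> f i <= g i) -> rsum n f <= rsum n g.
Proof.
  induction n as [|n IH]; intros H; simpl; [lra|].
  apply Rplus_le_compat; [apply IH; intros; apply H|apply H]; lia.
Qed.

Lemma rsum_plus n f g : rsum n (fun i => f i + g i) = rsum n f + rsum n g.
Proof. induction n as [|n IH]; simpl; [lra|]. rewrite IH; ring. Qed.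

Lemma rsum_scal n c f : rsum n (fun i => c * f i) = c * rsum n f.
Proof. induction n as [|n IH]; simpl; [lra|]. rewrite IH; ring. Qed.

Lemma rsum_nonneg n f : (forall i, (i < n)%nat -> 0 <= f i) -> 0 <= rsum n f.
Proof.
  induction n as [|n IH]; intros H; simpl; [lra|].
  apply Rplus_le_le_0_compat; [apply IH; intros; apply H|apply H]; lia.
Qed.

Lemma rsum_term_le n f i :
  (forall i, (i < n)%nat -> 0 <= f i) -> (i < n)%nat -> f i <= rsum n f.
Proof.
  induction n as [|n IH]; intros H Hi; simpl; [lia|].
  destruct (Nat.eq_dec i n) as [->|Hne].
  - assert (0 <= rsum n f) by (apply rsum_nonneg; intros; apply H; lia). lra.
  - assert (f i <= rsum n f) by (apply IH; [intros; apply H|]; lia).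
    assert (0 <= f n) by (apply H; lia). lra.
Qed.

Lemma rsum_eq0_nonneg n f i :
  (forall i, (i < n)%nat -> 0 <= f i) -> rsum n f = 0 -> (i < n)%nat -> f i = 0.
Proof.
  intros Hf Hsum Hi.
  pose proof (rsum_term_le n f i Hf Hi). pose proof (Hf i Hi). lra.
Qed.

Lemma norm2_sq n x : norm2 n x ^ 2 = rsum n (fun i => x i ^ 2).
Proof. apply pow2_sqrt, rsum_nonneg; intros; apply pow2_ge_0. Qed.

Lemma norm2_nonneg n x : 0 <= norm2 n x.
Proof. apply sqrt_pos. Qed.

Lemma norm1_nonneg n x : 0 <= norm1 n x.
Proof. apply rsum_nonneg; intros; apply Rabs_pos. Qed.

Lemma norm2_eq0 n x : norm2 n x = 0 -> forall i, (i < n)%nat -> x i = 0.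
Proof.
  intros H i Hi.
  assert (Hsq : rsum n (fun i => x i ^ 2) = 0) by (rewrite <- norm2_sq, H; ring).
  destruct (Req_dec (x i) 0) as [|Hne]; [assumption|]. exfalso.
  exact (pow_nonzero _ 2 Hne (rsum_eq0_nonneg n _ i (fun i _ => pow2_ge_0 (x i)) Hsq Hi)).
Qed.

Lemma norm1_eq0 n x : norm1 n x = 0 -> forall i, (i < n)%nat -> x i = 0.
Proof.
  intros H i Hi. destruct (Req_dec (x i) 0) as [|Hne]; [assumption|]. exfalso.
  exact (Rabs_no_R0 _ Hne (rsum_eq0_nonneg n _ i (fun i _ => Rabs_pos (x i)) H Hi)).
Qed.

Lemma norm2_scal_sq n c x : norm2 n (fun j => c * x j) ^ 2 = c ^ 2 * norm2 n x ^ 2.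
Proof. rewrite !norm2_sq, <- rsum_scal. apply rsum_ext; intros; ring. Qed.

Lemma norm1_scal n c x : norm1 n (fun j => c * x j) = Rabs c * norm1 n x.
Proof. unfold norm1. rewrite <- rsum_scal. apply rsum_ext; intros; apply Rabs_mult. Qed.

Lemma applyA_lowrank_ext n1 n2 a Rk u v u' v' :
  (forall r j k, (r < Rk)%nat -> (j < n1)%nat -> (k < n2)%nat ->
     u r j * v r k = u' r j * v' r k) ->
  forall i, applyA n1 n2 a (lowrank Rk u v) i = applyA n1 n2 a (lowrank Rk u' v') i.
Proof.
  intros H i. unfold applyA, lowrank.
  apply rsum_ext; intros j Hj. apply rsum_ext; intros k Hk.
  f_equal. apply rsum_ext; intros r Hr. apply H; assumption.
Qed.

Lemma J_ge_residual m n1 n2 a y Rk alpha beta u v :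
  0 <= alpha -> 0 <= beta ->
  norm2 m (fun i => y i - applyA n1 n2 a (lowrank Rk u v) i) ^ 2
  <= J m n1 n2 a y Rk alpha beta u v.
Proof.
  intros Ha Hb. unfold J.
  assert (0 <= alpha * rsum Rk (fun r => norm2 n1 (u r) ^ 2)).
  { apply Rmult_le_pos; [lra|]. apply rsum_nonneg; intros; apply pow2_ge_0. }
  assert (0 <= beta * rsum Rk (fun r => norm1 n2 (v r))).
  { apply Rmult_le_pos; [lra|]. apply rsum_nonneg; intros; apply norm1_nonneg. }
  lra.
Qed.

Lemma J_rank_one_split m n1 n2 a y Rk alpha beta u v :
  J m n1 n2 a y Rk alpha beta u v
  = norm2 m (fun i => y i - applyA n1 n2 a (lowrank Rk u v) i) ^ 2
    + rsum Rk (fun r => alpha * norm2 n1 (u r) ^ 2 + beta * norm1 n2 (v r)).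
Proof. unfold J. rewrite rsum_plus, !rsum_scal. ring. Qed.

(* The cube root of the stationarity condition 2 alpha c^3 a^2 = beta b. *)
Definition balance_scale (alpha beta a b : R) : R :=
  Rpower (beta * b / (2 * alpha * a ^ 2)) (1/3).

Lemma balance_scale_pos alpha beta a b : 0 < balance_scale alpha beta a b.
Proof. apply exp_pos. Qed.

Lemma ln_balance_scale alpha beta a b :
  0 < alpha -> 0 < beta -> 0 < a -> 0 < b ->
  ln (balance_scale alpha beta a b) = (ln beta + ln b - ln 2 - ln alpha - 2 * ln a) / 3.
Proof.
  intros Ha Hb HA HB. unfold balance_scale, Rpower, Rdiv.
  assert (0 < a ^ 2) by (apply pow_lt; lra).
  rewrite ln_exp, ln_mult, ln_mult, ln_Rinv, !ln_mult, ln_pow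
    by (repeat apply Rmult_lt_0_compat; try apply Rinv_0_lt_compat;
        try apply Rmult_lt_0_compat; lra).
  simpl INR. field.
Qed.

Lemma balanced_cost alpha beta a b :
  0 < alpha -> 0 < beta -> 0 < a -> 0 < b ->
  let c := balance_scale alpha beta a b in
  alpha * (c ^ 2 * a ^ 2) + beta * (/ c * b)
  = C21 * Rpower (alpha * beta ^ 2) (1/3) * Rpower (a * b) (2/3).
Proof.
  intros Ha Hb HA HB c.
  assert (Hc : 0 < c) by apply balance_scale_pos.
  assert (Hlnc := ln_balance_scale alpha beta a b Ha Hb HA HB). fold c in Hlnc.
  assert (0 < beta ^ 2) by (apply pow_lt; lra).
  assert (Hrhs : forall k, 0 < k ->
    0 < k * Rpower (alpha * beta ^ 2) (1/3) * Rpower (a * b) (2/3)).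
  { intros k Hk. repeat apply Rmult_lt_0_compat; try apply exp_pos; lra. }
  assert (E1 : alpha * (c ^ 2 * a ^ 2)
               = Rpower (1/2) (2/3) * Rpower (alpha * beta ^ 2) (1/3) * Rpower (a * b) (2/3)).
  { apply ln_inv.
    - repeat apply Rmult_lt_0_compat; try apply pow_lt; lra.
    - apply Hrhs, exp_pos.
    - unfold Rpower, Rdiv.
      rewrite !ln_mult, !ln_exp, !ln_pow, ln_1, ln_Rinv, Hlnc
        by (try apply Rmult_lt_0_compat; try apply Rinv_0_lt_compat;
            try apply pow_lt; try apply exp_pos; lra).
      simpl INR. field. }
  assert (E2 : beta * (/ c * b)
               = Rpower 2 (1/3) * Rpower (alpha * beta ^ 2) (1/3) * Rpower (a * b) (2/3)).
  { apply ln_inv.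
    - repeat apply Rmult_lt_0_compat; try apply Rinv_0_lt_compat; lra.
    - apply Hrhs, exp_pos.
    - unfold Rpower.
      rewrite !ln_mult, !ln_exp, ln_pow, ln_Rinv, Hlnc
        by (try apply Rmult_lt_0_compat; try apply Rinv_0_lt_compat;
            try apply pow_lt; try apply exp_pos; lra).
      simpl INR. field. }
  unfold C21. lra.
Qed.

(* Degenerate terms (a b = 0) get scale 0, and then also [/ 0 = 0]: the rescaled term
   is the zero term, which it already was. *)
Definition rank_one_scale (alpha beta : R) (n1 n2 : nat) (x z : nat -> R) : R :=
  let a := norm2 n1 x in let b := norm1 n2 z in
  if Req_EM_T (a * b) 0 then 0 else balance_scale alpha beta a b.

Lemma rank_one_rescale_product alpha beta n1 n2 x z j k :
  (j < n1)%nat -> (k < n2)%nat ->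
  let c := rank_one_scale alpha beta n1 n2 x z in
  c * x j * (/ c * z k) = x j * z k.
Proof.
  intros Hj Hk c. unfold c, rank_one_scale.
  destruct (Req_EM_T (norm2 n1 x * norm1 n2 z) 0) as [E|E].
  - destruct (Rmult_integral _ _ E) as [Ex|Ez].
    + rewrite (norm2_eq0 _ _ Ex j Hj). ring.
    + rewrite (norm1_eq0 _ _ Ez k Hk). ring.
  - pose proof (balance_scale_pos alpha beta (norm2 n1 x) (norm1 n2 z)). field. lra.
Qed.

Lemma rank_one_rescale_penalty alpha beta n1 n2 x z :
  0 < alpha -> 0 < beta ->
  let c := rank_one_scale alpha beta n1 n2 x z in
  alpha * norm2 n1 (fun j => c * x j) ^ 2 + beta * norm1 n2 (fun k => / c * z k)
  = C21 * Rpower (alpha * beta ^ 2) (1/3) * rpow (norm2 n1 x * norm1 n2 z) (2/3).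
Proof.
  intros Ha Hb c. rewrite norm2_scal_sq, norm1_scal. unfold c, rank_one_scale, rpow.
  pose proof (norm2_nonneg n1 x). pose proof (norm1_nonneg n2 z).
  destruct (Req_EM_T (norm2 n1 x * norm1 n2 z) 0) as [E|E].
  - rewrite Rinv_0, Rabs_R0. ring.
  - assert (norm2 n1 x <> 0) by (intro Z; apply E; rewrite Z; ring).
    assert (norm1 n2 z <> 0) by (intro Z; apply E; rewrite Z; ring).
    rewrite Rabs_right by (left; apply Rinv_0_lt_compat, balance_scale_pos).
    apply balanced_cost; lra.
Qed.

Theorem mainTheorem2
  (m n1 n2 : nat) (a : nat -> nat -> nat -> R)
  (Rk : nat) (HR : (1 <= Rk)%nat) (alpha beta : R)
  (Halpha : 0 < alpha) (Hbeta : 0 < beta)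
  (uh vh : nat -> nat -> R) (eta : nat -> R) (y : nat -> R)
  (Hy : forall i, y i = applyA n1 n2 a (lowrank Rk uh vh) i + eta i)
  (u v : nat -> nat -> R)
  (Hmin : forall u' v' : nat -> nat -> R,
      J m n1 n2 a y Rk alpha beta u v <= J m n1 n2 a y Rk alpha beta u' v') :
  (norm2 m (fun i => y i - applyA n1 n2 a (lowrank Rk u v) i)) ^ 2
  <= (norm2 m eta) ^ 2
     + C21 * Rpower (alpha * beta ^ 2) (1/3)
       * rsum Rk (fun r => rpow (norm2 n1 (uh r) * norm1 n2 (vh r)) (2/3)).
Proof.
  set (c r := rank_one_scale alpha beta n1 n2 (uh r) (vh r)).
  set (u' r j := c r * uh r j). set (v' r k := / c r * vh r k).
  assert (Hresidual : forall i, y i - applyA n1 n2 a (lowrank Rk u' v') i = eta i).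
  { intro i. rewrite Hy, (applyA_lowrank_ext n1 n2 a Rk uh vh u' v'); [ring|].
    intros r j k _ Hj Hk. symmetry. apply rank_one_rescale_product; assumption. }
  assert (Hcompetitor : J m n1 n2 a y Rk alpha beta u' v'
    = norm2 m eta ^ 2 + C21 * Rpower (alpha * beta ^ 2) (1/3)
        * rsum Rk (fun r => rpow (norm2 n1 (uh r) * norm1 n2 (vh r)) (2/3))).
  { rewrite J_rank_one_split, <- rsum_scal. f_equal.
    - unfold norm2. do 2 f_equal. apply rsum_ext. intros i _. rewrite Hresidual. reflexivity.
    - apply rsum_ext. intros r _. apply rank_one_rescale_penalty; assumption. }
  rewrite <- Hcompetitor.
  apply (Rle_trans _ (J m n1 n2 a y Rk alpha beta u v)); [apply J_ge_residual; lra | apply Hmin].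
Qed.
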